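(* Let $(G,M,I)$ be a finite formal context and fix an integer $k\ge 0$. Consider the cosheaf $\mathcal F_k$ on $D(G,M,I)$ with costalks $\mathcal F_k(\sigma)=C_k(\Delta[\sigma'])$ (the degree-$k$ part of the real simplicial chain complex of the full simplex on $\sigma'$) and extension maps $\mathcal F_k(\sigma\subseteq\tau):\mathcal F_k(\tau)\to\mathcal F_k(\sigma)$ induced by the inclusions $\tau'\subseteq\sigma'$. Then the cellular cosheaf homology of $\mathcal F_k$ satisfies $H_j(\mathcal F_k)=0$ for all $j>0$.
   Context: A formal context is a triple $(G,M,I)$ with $I\subseteq G\times M$; for $A\subseteq G$, $A'=\{m: gIm\ \forall g\in A\}$, for $B\subseteq M$, $B'=\{g: gIm\ \forall m\in B\}$. The Dowker complex $D(G,M,I)$ is the abstract simplicial complex on $G$ whose simplices are the nonempty $\sigma\subseteq G$ with $\sigma'\ne\emptyset$. Fix linear orders on $G$ and $M$ (used to orient simplices). For a cosheaf $\mathcal F$ of real vector spaces on $D(G,M,I)$ (vector spaces $\mathcal F(\sigma)$ and linear maps $\mathcal F(\sigma\subseteq\tau):\mathcal F(\tau)\to\mathcal F(\sigma)$, functorial in $\sigma\subseteq\tau$), its cellular cosheaf homology is the homology of the chain complex $C_j=\bigoplus_{\dim\tau=j}\mathcal F(\tau)$ with $\partial_j x=\sum_{i=0}^{j}(-1)^i\mathcal F(\tau_i\subseteq\tau)(x)$ for $x\in\mathcal F(\tau)$, $\tau=\{g_0<\dots<g_j\}$, $\tau_i=\tau\setminus\{g_i\}$. *)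

From mathcomp Require Import all_boot all_order all_algebra.
From mathcomp Require Import reals.
Set Implicit Arguments. Unset Strict Implicit. Unset Printing Implicit Defensive.
Import Order.TTheory GRing.Theory Num.Theory.
Local Open Scope ring_scope.

(* A finite formal context (G,M,I) with G = 'I_n, M = 'I_m (their natural
   linear orders are the fixed orders), and I a relation G x M. *)
Section Dowker.
Variables (n m : nat) (I : 'I_n -> 'I_m -> bool).

Definition derG (A : {set 'I_n}) : {set 'I_m} :=
  [set x : 'I_m | [forall g in A, I g x]].

Definition dowker_simplex (s : {set 'I_n}) : bool :=
  (s != set0) && (derG s != set0).

(* A chain in C_j(F_k): the cellular chain group
     C_j = (+)_{dim tau = j} F_k(tau),  F_k(tau) = C_k(Delta[tau']),
   with C_k(Delta[tau']) the real vector space with basis the k-simplices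
   (subsets of size k+1) of the full simplex on tau'.  An element is given
   by its coefficient x tau rho on the basis vector rho of the summand tau. *)
Definition cosheaf_chain (k j : nat) (R : realType)
  (x : {set 'I_n} -> {set 'I_m} -> R) : Prop :=
  forall (tau : {set 'I_n}) (rho : {set 'I_m}), x tau rho != 0 ->
    [/\ dowker_simplex tau, #|tau| = j.+1,
        rho \subset derG tau & #|rho| = k.+1].

(* Extension map F_k(sigma <= tau) : C_k(Delta[tau']) -> C_k(Delta[sigma'])
   induced by tau' <= sigma': sends the oriented simplex rho to itself
   (orientations come from the fixed order on M, preserved by inclusion).
   Hence the cellular boundary
     d x = sum_i (-1)^i F_k(tau_i <= tau)(x),  tau_i = tau \ {g_i}
   has coefficient at (sigma, rho) the sum over tau = sigma + {g}, g notin sigma,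
   with sign (-1)^i, i = position of g in tau = #{h in sigma | h < g}. *)
Definition cosheaf_bd (R : realType) (x : {set 'I_n} -> {set 'I_m} -> R)
  (sigma : {set 'I_n}) (rho : {set 'I_m}) : R :=
  \sum_(g : 'I_n | g \notin sigma)
     (-1) ^+ #|[set h in sigma | (h < g)%N]| * x (g |: sigma) rho.

End Dowker.

From mathcomp Require Import all_boot all_order all_algebra.
From mathcomp Require Import reals.
Set Implicit Arguments. Unset Strict Implicit. Unset Printing Implicit Defensive.
Import GRing.Theory.
Local Open Scope ring_scope.

(* For a fixed k-simplex rho of M, the rho-component of a chain of F_k is an
   ordinary simplicial chain on the objects, supported on the full simplex
   rho' = {g | g I r for all r in rho} of objects incident to all of rho.
   A full simplex is a cone over any of its vertices; coning from the least
   vertex v of rho' gives a chain homotopy d (v * c) = c - v * (d c), so every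
   cycle c is the boundary of v * c. *)

Section SimplicialCone.
Variables (R : pzRingType) (n : nat).

Definition chain_bd (f : {set 'I_n} -> R) (sigma : {set 'I_n}) : R :=
  \sum_(g | g \notin sigma) (-1) ^+ #|[set h in sigma | (h < g)%N]| * f (g |: sigma).

Definition cone (v : 'I_n) (f : {set 'I_n} -> R) (tau : {set 'I_n}) : R :=
  if v \in tau then f (tau :\ v) else 0.

Lemma below_min_set0 (sigma : {set 'I_n}) (v : 'I_n) :
  (forall h, h \in sigma -> (v <= h)%N) -> [set h in sigma | (h < v)%N] = set0.
Proof.
move=> v_min; apply/setP=> h; rewrite !inE.
by case: (boolP (h \in sigma)) => //= /v_min; rewrite leqNgt => /negbTE.
Qed.

Lemma card_below_setD1 (sigma : {set 'I_n}) (v g : 'I_n) :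
  v \in sigma -> (v < g)%N ->
  #|[set h in sigma | (h < g)%N]| = #|[set h in sigma :\ v | (h < g)%N]|.+1.
Proof.
move=> v_sigma v_g.
have -> : [set h in sigma | (h < g)%N] = v |: [set h in sigma :\ v | (h < g)%N].
  by apply/setP=> h; rewrite !inE; case: (eqVneq h v) => [->|] //=; rewrite v_sigma.
by rewrite cardsU1 !inE eqxx.
Qed.

Variables (v : 'I_n) (f : {set 'I_n} -> R).
Hypothesis v_below_support : forall tau h, f tau != 0 -> h \in tau -> (v <= h)%N.

Lemma chain_bd_cone_notin (sigma : {set 'I_n}) :
  v \notin sigma -> chain_bd (cone v f) sigma = f sigma.
Proof.
move=> v_sigma; rewrite /chain_bd (bigD1 v) //= big1 ?addr0; last first.
  move=> g /andP[_ g_v]; rewrite /cone in_setU1 eq_sym (negbTE g_v).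
  by rewrite (negbTE v_sigma) mulr0.
rewrite /cone setU11 setU1K //.
have [-> | f_sigma] := eqVneq (f sigma) 0; first by rewrite mulr0.
by rewrite below_min_set0 ?cards0 ?mul1r // => h; apply: v_below_support.
Qed.

Lemma chain_bd_cone_in (sigma : {set 'I_n}) :
  v \in sigma -> chain_bd (cone v f) sigma = f sigma - chain_bd f (sigma :\ v).
Proof.
move=> v_sigma; rewrite [chain_bd f _](bigD1 v) ?inE ?eqxx //= setD1K //.
have -> : (-1) ^+ #|[set h in sigma :\ v | (h < v)%N]| * f sigma = f sigma.
  have [-> | f_sigma] := eqVneq (f sigma) 0; first by rewrite mulr0.
  rewrite below_min_set0 ?cards0 ?mul1r // => h /setD1P[_].
  exact: v_below_support.
rewrite opprD addrA subrr add0r /chain_bd -sumrN.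
apply: eq_big => [g | g g_sigma].
  by rewrite in_setD1; case: eqVneq => [->|]; rewrite ?v_sigma ?andbT.
have g_v : g != v by apply: contraNneq g_sigma => ->.
rewrite /cone in_setU1 v_sigma orbT.
have -> : (g |: sigma) :\ v = g |: (sigma :\ v).
  by apply/setP=> h; rewrite !inE; case: (eqVneq h v) => [->|//]; rewrite eq_sym (negbTE g_v).
have [-> | f_g] := eqVneq (f (g |: (sigma :\ v))) 0; first by rewrite !mulr0 oppr0.
have v_g : (v < g)%N.
  rewrite ltn_neqAle (v_below_support f_g (setU11 _ _)) andbT.
  by apply: contra g_v => /eqP/val_inj ->.
by rewrite (card_below_setD1 v_sigma v_g) exprS mulN1r mulNr.
Qed.

Lemma chain_bd_cone (sigma : {set 'I_n}) :
  chain_bd (cone v f) sigma = f sigma - cone v (chain_bd f) sigma.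
Proof.
rewrite {2}/cone; case: ifPn => [/chain_bd_cone_in | /chain_bd_cone_notin] //.
by rewrite subr0.
Qed.

Lemma chain_bd_cone_cycle :
  (forall sigma, chain_bd f sigma = 0) -> forall sigma, chain_bd (cone v f) sigma = f sigma.
Proof. by move=> f_cycle sigma; rewrite chain_bd_cone /cone; case: ifP; rewrite ?f_cycle subr0. Qed.

End SimplicialCone.

Section DowkerCone.
Variables (n m : nat) (I : 'I_n -> 'I_m -> bool).

Definition derM (rho : {set 'I_m}) : {set 'I_n} := [set g | [forall r in rho, I g r]].

Lemma sub_derG_derM (tau : {set 'I_n}) (rho : {set 'I_m}) :
  (rho \subset derG I tau) = (tau \subset derM rho).
Proof.
apply/subsetP/subsetP=> [sub g g_tau | sub r r_rho]; rewrite inE; apply/forall_inP.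
- by move=> r /sub; rewrite inE => /forall_inP; apply.
- by move=> g /sub; rewrite inE => /forall_inP; apply.
Qed.

Definition apex (rho : {set 'I_m}) : option 'I_n :=
  [pick v in derM rho | [forall w in derM rho, (v <= w)%N]].

Variant apex_spec (rho : {set 'I_m}) : option 'I_n -> Type :=
  | ApexNone of derM rho = set0 : apex_spec rho None
  | ApexSome v of v \in derM rho & (forall w, w \in derM rho -> (v <= w)%N) :
      apex_spec rho (Some v).

Lemma apexP (rho : {set 'I_m}) : apex_spec rho (apex rho).
Proof.
rewrite /apex; case: pickP => [v /andP[v_rho /forall_inP v_min] | no_min].
  exact: ApexSome.
apply: ApexNone; apply/setP=> g; rewrite in_set0; apply/negbTE/negP=> g_rho.
have [v v_rho v_min] := arg_minnP (fun i : 'I_n => val i) g_rho.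
move/negP: (negbT (no_min v)); apply.
by apply/andP; split; [exact: v_rho | apply/forall_inP].
Qed.

Variables (R : realType) (k j : nat) (x : {set 'I_n} -> {set 'I_m} -> R).

Definition cosheaf_cone (tau : {set 'I_n}) (rho : {set 'I_m}) : R :=
  if apex rho is Some v then cone v (x^~ rho) tau else 0.

Hypothesis x_chain : cosheaf_chain I k j x.

Lemma chain_sub_derM (tau : {set 'I_n}) (rho : {set 'I_m}) :
  x tau rho != 0 -> tau \subset derM rho.
Proof. by case/x_chain=> _ _; rewrite sub_derG_derM. Qed.

Lemma chain_derM_set0 (tau : {set 'I_n}) (rho : {set 'I_m}) :
  derM rho = set0 -> x tau rho = 0.
Proof.
move=> rho'0; apply/eqP/negPn/negP=> x_nz.
have [/andP[/set0Pn[g g_tau] _] _ _ _] := x_chain x_nz.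
by have := subsetP (chain_sub_derM x_nz) g g_tau; rewrite rho'0 inE.
Qed.

Lemma cosheaf_chain_cone : cosheaf_chain I k j.+1 cosheaf_cone.
Proof.
move=> tau rho; rewrite /cosheaf_cone /cone.
case: apexP => [_ | v v_rho _]; first by rewrite eqxx.
case: ifPn => [v_tau | _]; last by rewrite eqxx.
move=> x_nz; have [_ card_tau _ card_rho] := x_chain x_nz.
have tau_rho : tau \subset derM rho.
  by rewrite -(setD1K v_tau) subUset sub1set v_rho chain_sub_derM.
have rho_tau : rho \subset derG I tau by rewrite sub_derG_derM.
split=> //; last by rewrite (cardsD1 v tau) v_tau card_tau.
apply/andP; split; first by apply/set0Pn; exists v.
have /set0Pn[r r_rho] : rho != set0 by rewrite -card_gt0 card_rho.
by apply/set0Pn; exists r; apply: (subsetP rho_tau).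
Qed.

Lemma cosheaf_bd_cone :
  (forall sigma rho, cosheaf_bd x sigma rho = 0) ->
  forall sigma rho, cosheaf_bd cosheaf_cone sigma rho = x sigma rho.
Proof.
move=> x_cycle sigma rho; rewrite /cosheaf_bd /cosheaf_cone.
case: apexP => [rho'0 | v _ v_min].
  by rewrite (chain_derM_set0 _ rho'0) big1 // => g _; rewrite mulr0.
apply: (chain_bd_cone_cycle (f := x^~ rho)) => [tau h x_nz h_tau | tau].
  exact/v_min/(subsetP (chain_sub_derM x_nz)).
exact: x_cycle.
Qed.

End DowkerCone.

Theorem mainTheorem5 (R : realType) (n m : nat) (I : 'I_n -> 'I_m -> bool)
  (k j : nat) : (0 < j)%N ->
  forall x : {set 'I_n} -> {set 'I_m} -> R,
    cosheaf_chain I k j x ->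
    (forall sigma rho, cosheaf_bd x sigma rho = 0) ->
    exists y : {set 'I_n} -> {set 'I_m} -> R,
      cosheaf_chain I k j.+1 y /\
      (forall sigma rho, cosheaf_bd y sigma rho = x sigma rho).
Proof.
move=> _ x x_chain x_cycle; exists (cosheaf_cone I x); split.
- exact: cosheaf_chain_cone.
- exact: cosheaf_bd_cone x_chain x_cycle.
Qed.
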